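(* Let $C$ be an $[n,k]$ code over $\mathbb{F}_q$ with $d(C^\perp)=4$. Then $\gamma(C)\le k-2$ $(=k-d(C^\perp)+2)$.
   Context: An $[n,k]$ code over $\mathbb{F}_q$ is a $k$-dimensional subspace $C\subseteq\mathbb{F}_q^n$; write $E=\{1,\dots,n\}$. For $\bm{x}\in\mathbb{F}_q^n$, $\mathrm{supp}(\bm{x})=\{i: x_i\neq 0\}$ and the weight is $|\mathrm{supp}(\bm{x})|$; for $B\subseteq\mathbb{F}_q^n$, $\mathrm{Supp}(B)=\bigcup_{\bm{x}\in B}\mathrm{supp}(\bm{x})$. $C^\perp$ is the dual code with respect to the standard inner product and $d(C^\perp)$ is the minimum weight of a nonzero codeword of $C^\perp$. The covering dimension is $\gamma(C)=\infty$ if $\mathrm{Supp}(C)\neq E$, and otherwise $\gamma(C)$ is the least positive integer $r$ such that $C$ has an $r$-dimensional subspace $D$ with $\mathrm{Supp}(D)=E$. *)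

(* Codes are represented, as in mxalgebra, by the row space
   of a matrix: a linear code C <= F_q^n is a matrix C : 'M[F]_n whose row
   space is the code, and its dimension is \rank C. *)
From HB Require Import structures.
From mathcomp Require Import all_boot all_order all_algebra all_field.
Set Implicit Arguments. Unset Strict Implicit. Unset Printing Implicit Defensive.
Import GRing.Theory.
Local Open Scope ring_scope.

Section Codes.
Variables (F : finFieldType) (n : nat).

Definition supp (x : 'rV[F]_n) : {set 'I_n} := [set i | x 0 i != 0].

Definition wt (x : 'rV[F]_n) : nat := #|supp x|.

Definition Supp m (D : 'M[F]_(m, n)) : {set 'I_n} :=
  [set i | [exists x : 'rV[F]_n, (x <= D)%MS && (x 0 i != 0)]].

Definition in_dual m (C : 'M[F]_(m, n)) (y : 'rV[F]_n) : bool :=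
  [forall x : 'rV[F]_n, (x <= C)%MS ==> ((x *m y^T) 0 0 == 0)].

Definition dual_min_dist_is m (C : 'M[F]_(m, n)) (d : nat) : Prop :=
  (exists y : 'rV[F]_n, [/\ in_dual C y, y != 0 & wt y = d]) /\
  (forall y : 'rV[F]_n, in_dual C y -> y != 0 -> (d <= wt y)%N).

Definition has_covering_subspace m (C : 'M[F]_(m, n)) (r : nat) : bool :=
  [exists D : 'M[F]_(r, n),
     [&& (D <= C)%MS, \rank D == r & Supp D == setT]].

(* covering dimension: None encodes infinity.  Subspaces of F^n have
   dimension at most n, so the least positive r is searched in 1..n. *)
Definition covering_dim m (C : 'M[F]_(m, n)) : option nat :=
  if Supp C == setT then ohead [seq r <- iota 1 n | has_covering_subspace C r]
  else None.

End Codes.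

(* Fix three coordinates s.  Since C^perp has no nonzero word of weight <= 3, the
   restriction of C to any three coordinates is onto F^3; so some codewords u_1, u_2,
   u_3 restrict to the unit vectors on s, and on every coordinate i where the subcode
   vanishing on s is identically zero, x_i is a linear form phi_i of the restriction
   of x, any three of these forms being again independent.  Read projectively, the
   phi_i are lines of PG(2, q) no three of which are concurrent, and counting the
   first two moments of the number of lines through a point shows that such lines
   never cover the plane: some v <> 0 satisfies phi_i(v) <> 0 for all these i.  The
   codewords whose restriction to s lies in the span of v then form a subcode of
   codimension 2 with full support: v (u_1, u_2, u_3) covers the determined
   coordinates, the subcode vanishing on s covers the others. *)

From HB Require Import structures.
From mathcomp Require Import all_boot all_order all_algebra all_field.
From mathcomp Require Import mxabelem zify.

Set Implicit Arguments. Unset Strict Implicit. Unset Printing Implicit Defensive.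
Import GRing.Theory Num.Theory.
Local Open Scope ring_scope.

(* K counts the nonzero points, S1 and S2 the first two moments of the number of
   lines through them; 4 (2 K + S2 - 3 S1) = (q - 1) ((2m - 2q - 3)^2 + 4q^2 - 4q - 1). *)
Lemma arc_count_contradiction q m K S1 S2 :
  (1 < q -> K + 1 = q ^ 3 -> m + S1 = m * q ^ 2 ->
   m * m + S2 = m * (q ^ 2 + (m - 1) * q) -> 3 * S1 < 2 * K + S2)%N.
Proof.
move=> q_gt1 defK defS1 defS2.
have : 0 < (q%:Z - 1) * ((2 * m%:Z - 2 * q%:Z - 3) ^+ 2 + 4 * q%:Z ^+ 2 - 4 * q%:Z - 1).
  apply: mulr_gt0; first by lia.
  by have := sqr_ge0 (2 * m%:Z - 2 * q%:Z - 3); nia.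
nia.
Qed.

Lemma sum_nat_of_bool (I : finType) (P : pred I) :
  (\sum_i (P i : nat))%N = #|[set i | P i]|.
Proof. by rewrite -sum1dep_card [RHS]big_mkcond. Qed.

Lemma card_kernel (F : finFieldType) p m (M : 'M[F]_(p, m)) :
  #|[set v : 'rV[F]_p | v *m M == 0]| = (#|F| ^ (p - \rank M))%N.
Proof. by rewrite -mxrank_ker -card_rowg; apply: eq_card => v; rewrite !inE sub_kermx. Qed.

Section ArcInPlane.
Variables (F : finFieldType) (p : nat) (A : 'M[F]_(3, p)) (T : {set 'I_p}).
Hypothesis rank_colsub : forall m (f : 'I_m -> 'I_p),
  (m <= 3)%N -> injective f -> (forall t, f t \in T) -> \rank (colsub f A) = m.

Local Notation q := #|F|.

Lemma card_common_zeros m (f : 'I_m -> 'I_p) :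
  (m <= 3)%N -> injective f -> (forall t, f t \in T) ->
  #|[set v : 'rV[F]_3 | [forall t, (v *m A) 0 (f t) == 0]]| = (q ^ (3 - m))%N.
Proof.
move=> m_le3 f_inj fT.
have -> : (3 - m = 3 - \rank (colsub f A))%N by rewrite rank_colsub.
rewrite -card_kernel.
apply: eq_card => v; rewrite !inE mulmx_colsub.
apply/forallP/eqP => [v0 | /rowP v0 t]; last by have := v0 t; rewrite !mxE => ->.
by apply/rowP => t; move/eqP: (v0 t); rewrite !mxE.
Qed.

Lemma card_zeros1 i : i \in T -> #|[set v : 'rV[F]_3 | (v *m A) 0 i == 0]| = (q ^ 2)%N.
Proof.
move=> iT; have const_inj : injective (fun _ : 'I_1 => i).
  by move=> a b _; rewrite (ord1 a) (ord1 b).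
rewrite -(@card_common_zeros 1 _ isT const_inj (fun _ => iT)).
apply: eq_card => v; rewrite !inE.
by apply/idP/forallP => [v0 _ | /(_ ord0)].
Qed.

Lemma card_zeros2 i j : i \in T -> j \in T -> i != j ->
  #|[set v : 'rV[F]_3 | ((v *m A) 0 i == 0) && ((v *m A) 0 j == 0)]| = q.
Proof.
move=> iT jT ij; set t := [tuple i; j].
have t_inj : injective (tnth t) by apply/tuple_uniqP; rewrite /= inE ij.
have tT u : tnth t u \in T by move: (mem_tnth u t); rewrite mem_seq2 => /orP [] /eqP ->.
rewrite -[q]expn1 -(@card_common_zeros 2 _ isT t_inj tT).
apply: eq_card => v; rewrite !inE; apply/andP/forallP => [[vi vj] u | v0].
  by move: (mem_tnth u t); rewrite mem_seq2 => /orP [] /eqP ->.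
by split; [apply: (v0 ord0) | apply: (v0 ord_max)].
Qed.

Definition nulls (v : 'rV[F]_3) := [set i in T | (v *m A) 0 i == 0].

Lemma card_nulls v : #|nulls v| = (\sum_(i in T) ((v *m A) 0 i == 0)%R)%N.
Proof.
rewrite -sum1_card big_mkcond [RHS]big_mkcond /=.
by apply: eq_bigr => i _; rewrite inE; case: (i \in T).
Qed.

Lemma nulls0 : nulls 0 = T.
Proof. by apply/setP => i; rewrite !inE mul0mx mxE eqxx andbT. Qed.

Lemma card_nulls_le2 v : v != 0 -> (#|nulls v| <= 2)%N.
Proof.
move=> v_neq0; rewrite leqNgt; apply/card_gt2P => -[i [j [l [[iN jN lN] [ij jl li]]]]].
set t := [tuple i; j; l].
have t_inj : injective (tnth t).
  by apply/tuple_uniqP; rewrite /= !inE negb_or ij jl eq_sym li.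
have tN u : tnth t u \in nulls v.
  by move: (mem_tnth u t); rewrite mem_seq3 => /or3P [] /eqP ->.
have tT u : tnth t u \in T by have /setIdP [] := tN u.
have free : row_free (colsub (tnth t) A) by rewrite /row_free rank_colsub.
case/negP: v_neq0; rewrite -(mulmx_free_eq0 _ free) mulmx_colsub.
apply/eqP/rowP => u; have /setIdP [_ /eqP vA0] := tN u.
by rewrite mxE [RHS]mxE vA0.
Qed.

Lemma sum_card_nulls : (\sum_v #|nulls v| = #|T| * q ^ 2)%N.
Proof.
under eq_bigr => v _ do rewrite card_nulls.
rewrite exchange_big /= -sum_nat_const; apply: eq_bigr => i iT.
by rewrite sum_nat_of_bool card_zeros1.
Qed.

Lemma sum_card_nulls_sq :
  (\sum_v #|nulls v| * #|nulls v| = #|T| * (q ^ 2 + (#|T| - 1) * q))%N.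
Proof.
under eq_bigr => v _ do rewrite card_nulls big_distrlr /=.
rewrite exchange_big /= -sum_nat_const; apply: eq_bigr => i iT.
rewrite exchange_big /= (bigD1 i) //=; congr addn.
  by rewrite -(card_zeros1 iT) -sum_nat_of_bool; apply: eq_bigr => v _; case: eqP.
rewrite (eq_bigr (fun _ => q)) => [|j /andP [jT ji]]; last first.
  rewrite -(card_zeros2 iT jT) 1?eq_sym // -sum_nat_of_bool.
  by apply: eq_bigr => v _; case: eqP; case: eqP.
rewrite sum_nat_const (cardsD1 i T) iT add1n subSS subn0; congr muln.
by apply: eq_card => j; rewrite !inE andbC.
Qed.

Lemma exists_nonzero_on_arc :
  exists2 v : 'rV[F]_3, v != 0 & forall i, i \in T -> (v *m A) 0 i != 0.
Proof.
case: (pickP (fun v : 'rV[F]_3 => (v != 0) && (nulls v == set0))).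
  move=> v /andP [v_neq0 /eqP N0].
  exists v => // i iT; apply: contraT => /negbNE vi.
  by have := in_set0 i; rewrite -N0 inE iT vi.
move=> nulls_neq0; exfalso.
have N_bounds v : v != 0 -> (2 + #|nulls v| * #|nulls v| <= 3 * #|nulls v|)%N.
  move=> v_neq0; have := card_nulls_le2 v_neq0.
  have := nulls_neq0 v; rewrite v_neq0 /= => /negbT; rewrite -card_gt0.
  by case: #|nulls v| => [|[|[|]]].
have defK : (#|[set v : 'rV[F]_3 | v != 0%R]| + 1 = q ^ 3)%N.
  rewrite cardsE cardC1 card_mx mul1n addn1 prednK //.
  by rewrite expn_gt0 (ltnW (card_finNzRing_gt1 F)).
have := sum_card_nulls; rewrite (bigD1 0) //= nulls0 => defS1.
have := sum_card_nulls_sq; rewrite (bigD1 0) //= nulls0 => defS2.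
have : (\sum_(v | v != 0%R) (2 + #|nulls v| * #|nulls v|)
         <= \sum_(v | v != 0%R) 3 * #|nulls v|)%N by exact: leq_sum.
rewrite big_split /= -big_distrr /= sum_nat_cond_const mulnC.
by rewrite leqNgt (arc_count_contradiction (card_finNzRing_gt1 F) defK defS1 defS2).
Qed.

End ArcInPlane.

Lemma wt_mul_rowsub1 (F : finFieldType) n m (f : 'I_m -> 'I_n) (w : 'rV[F]_m) :
  (wt (w *m rowsub f 1%:M) <= m)%N.
Proof.
have supp_sub : supp (w *m rowsub f 1%:M) \subset f @: setT.
  apply/subsetP => i; rewrite inE; apply: contraR => i_notin_f.
  rewrite mxE; apply/eqP/big1 => t _; rewrite !mxE.
  by case: eqP => [fti | _]; [rewrite -fti imset_f in i_notin_f | rewrite mulr0].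
apply: leq_trans (subset_leq_card supp_sub) _.
by apply: leq_trans (leq_imset_card _ _) _; rewrite cardsT card_ord.
Qed.

Lemma colsub_mul_rowsub1 (F : finFieldType) n m (f : 'I_m -> 'I_n) (w : 'rV[F]_m) :
  injective f -> colsub f (w *m rowsub f 1%:M) = w.
Proof.
move=> f_inj; rewrite -mulmx_colsub -mxsubcr.
have -> : mxsub f f 1%:M = 1%:M :> 'M[F]_m.
  by apply/matrixP => a b; rewrite !mxE (inj_eq f_inj).
exact: mulmx1.
Qed.

Section DualDistance.
Variables (F : finFieldType) (n r d : nat) (C : 'M[F]_(r, n)).
Hypothesis dual_wt : forall y : 'rV[F]_n, in_dual C y -> y != 0 -> (d <= wt y)%N.

Lemma row_full_colsub m (f : 'I_m -> 'I_n) :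
  (m < d)%N -> injective f -> row_full (colsub f C).
Proof.
move=> m_lt_d f_inj; apply: contraT => not_full.
have : kermx (colsub f C)^T != 0.
  rewrite -mxrank_eq0 mxrank_ker mxrank_tr subn_eq0 -ltnNge ltn_neqAle not_full.
  exact: rank_leq_col.
case/rowV0Pn => w; rewrite sub_kermx => /eqP w_ker w_neq0.
have C_w : colsub f C *m w^T = 0 by rewrite -[LHS]trmxK trmx_mul trmxK w_ker trmx0.
set y := w *m rowsub f 1%:M.
have y_dual : in_dual C y.
  apply/forallP => x; apply/implyP => xC.
  rewrite trmx_mul trmx_mxsub trmx1 mulmxA mulmx_colsub mulmx1.
  by rewrite -(mulmxKpV xC) -mulmx_colsub -mulmxA C_w mulmx0 mxE.
have y_neq0 : y != 0.
  apply: contraNneq w_neq0 => y0; rewrite -(colsub_mul_rowsub1 w f_inj) -/y y0.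
  by apply/eqP/rowP => t; rewrite !mxE.
have := leq_trans (dual_wt y_dual y_neq0) (wt_mul_rowsub1 f w).
by rewrite leqNgt m_lt_d.
Qed.

Section FixedCoordinates.
Hypothesis d_gt3 : (3 < d)%N.
Variable s : 'I_3 -> 'I_n.
Hypothesis s_inj : injective s.

Definition unit_codewords := pinvmx (colsub s C) *m C.

Definition vanishing_subcode := C - colsub s C *m unit_codewords.

Definition determined_coords := ~: Supp vanishing_subcode.

Lemma unit_codewords_sub : (unit_codewords <= C)%MS.
Proof. exact: submxMl. Qed.

Lemma colsub_unit_codewords : colsub s unit_codewords = 1%:M.
Proof. by rewrite -mulmx_colsub mulVpmx // row_full_colsub. Qed.

Lemma vanishing_subcode_sub : (vanishing_subcode <= C)%MS.
Proof.
apply: addmx_sub => //; rewrite (eqmx_opp (_ *m _)).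
exact: submx_trans (submxMl _ _) unit_codewords_sub.
Qed.

Lemma colsub_vanishing m (x : 'M[F]_(m, n)) :
  (x <= vanishing_subcode)%MS -> colsub s x = 0.
Proof.
move=> xV; rewrite -(mulmxKpV xV) -mulmx_colsub.
have -> : colsub s vanishing_subcode = 0.
  by rewrite linearB /= -mulmx_colsub colsub_unit_codewords mulmx1 subrr.
exact: mulmx0.
Qed.

Lemma coord_determined i a : i \in determined_coords ->
  C a i = (colsub s C *m unit_codewords) a i.
Proof.
rewrite !inE negb_exists => /forallP /(_ (row a vanishing_subcode)).
rewrite row_sub negbK => Va_i; apply/eqP; rewrite -subr_eq0.
by move: Va_i; rewrite !mxE.
Qed.

Lemma rank_colsub_determined m (f : 'I_m -> 'I_n) :
  (m <= 3)%N -> injective f -> (forall t, f t \in determined_coords) ->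
  \rank (colsub f unit_codewords) = m.
Proof.
move=> m_le3 f_inj fD.
have colsub_C : colsub f C = colsub s C *m colsub f unit_codewords.
  rewrite mulmx_colsub; apply/matrixP => a t.
  by rewrite [LHS]mxE (coord_determined a (fD t)) [RHS]mxE.
have /eqP full := row_full_colsub (leq_ltn_trans m_le3 d_gt3) f_inj.
apply/eqP; rewrite eqn_leq rank_leq_col -[X in (X <= _)%N]full colsub_C.
exact: mxrankM_maxr.
Qed.

Lemma exists_covering_subcode :
  exists D : 'M[F]_n, [/\ (D <= C)%MS, (\rank D <= \rank C - 2)%N & Supp D = setT].
Proof.
have [v v_neq0 v_det] := exists_nonzero_on_arc rank_colsub_determined.
set B := colsub s 1%:M *m cokermx v.
have mulB m (x : 'M_(m, n)) : x *m B = colsub s x *m cokermx v.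
  by rewrite mulmxA mulmx_colsub mulmx1.
exists (C :&: kermx B)%MS; split; first exact: capmxSl.
  have : (cokermx v <= C *m B)%MS.
    rewrite -[cokermx v]mul1mx -colsub_unit_codewords -mulB.
    exact: submxMr unit_codewords_sub.
  move/mxrankS; rewrite mxrank_coker rank_rV v_neq0 /=.
  by move=> rank_CB; rewrite -(mxrank_mul_ker C B) addnC -addnBA // leq_addr.
apply/setP => i; rewrite !inE; apply/existsP.
case: (boolP (i \in determined_coords)) => [iD | ].
  exists (v *m unit_codewords).
  rewrite sub_capmx (submx_trans (submxMl _ _) unit_codewords_sub) sub_kermx mulB.
  by rewrite -mulmx_colsub colsub_unit_codewords mulmx1 mulmx_coker eqxx v_det.
rewrite !inE negbK => /existsP [x /andP [xV xi]]; exists x.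
rewrite sub_capmx (submx_trans xV vanishing_subcode_sub) sub_kermx mulB.
by rewrite colsub_vanishing // mul0mx eqxx.
Qed.

End FixedCoordinates.
End DualDistance.

Lemma SuppS (F : finFieldType) n m1 m2 (A : 'M[F]_(m1, n)) (B : 'M[F]_(m2, n)) :
  (A <= B)%MS -> Supp A \subset Supp B.
Proof.
move=> AB; apply/subsetP => i; rewrite !inE => /existsP [x /andP [xA xi]].
by apply/existsP; exists x; rewrite xi (submx_trans xA AB).
Qed.

Lemma ohead_filter_iota (P : pred nat) a b r :
  (a <= r)%N -> (r < a + b)%N -> P r ->
  exists g, ohead [seq x <- iota a b | P x] = Some g /\ (g <= r)%N.
Proof.
elim: b a => [|b IH] a a_le_r r_lt Pr; first by move: r_lt; rewrite addn0 ltnNge a_le_r.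
rewrite /=; case: (boolP (P a)) => [Pa | nPa]; first by exists a.
apply: IH => //; last by rewrite addSnnS.
by rewrite ltn_neqAle a_le_r andbT; apply: contraNneq nPa => ->.
Qed.

Lemma covering_dim_le (F : finFieldType) n m p (C : 'M[F]_(m, n)) (D : 'M[F]_(p, n)) :
  (0 < n)%N -> (D <= C)%MS -> Supp D = setT ->
  exists g, covering_dim C = Some g /\ (g <= \rank D)%N.
Proof.
move=> n_gt0 DC SuppD.
have rankD_gt0 : (0 < \rank D)%N.
  have : Ordinal n_gt0 \in Supp D by rewrite SuppD inE.
  rewrite inE lt0n mxrank_eq0 => /existsP [x /andP [xD]]; apply: contraNneq => D0.
  by move: xD; rewrite D0 => /submx0null ->; rewrite mxE.
have cover : has_covering_subspace C (\rank D).
  apply/existsP; exists (row_base D); rewrite !eq_row_base DC eqxx /=.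
  by rewrite eqEsubset subsetT -SuppD SuppS ?eq_row_base.
have SuppC : Supp C = setT by apply/eqP; rewrite eqEsubset subsetT -SuppD SuppS.
rewrite /covering_dim SuppC eqxx.
by apply: ohead_filter_iota rankD_gt0 _ cover; rewrite add1n ltnS rank_leq_col.
Qed.

Theorem mainTheorem11 (F : finFieldType) (n k : nat) (C : 'M[F]_n) :
  \rank C = k ->
  dual_min_dist_is C 4 ->
  exists g : nat, covering_dim C = Some g /\ (g <= k - 2)%N.
Proof.
move=> rankC [[y [_ _ wt_y]] dual_wt].
have n_gt3 : (3 < n)%N by rewrite -wt_y /wt -[X in (_ <= X)%N]card_ord max_card.
have s_inj : injective (widen_ord (ltnW n_gt3)) by move=> a b /(congr1 val) /= /val_inj.
have [D [DC rankD SuppD]] := exists_covering_subcode dual_wt (isT : (3 < 4)%N) s_inj.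
have [g [cover g_le]] := covering_dim_le (leq_ltn_trans (leq0n 3) n_gt3) DC SuppD.
by exists g; split; last by rewrite -rankC (leq_trans g_le rankD).
Qed.
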